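(* Let $\Gamma=(V,E)$ be a graph, let $M_v$ ($v\in V$) be monoids and $M=\Gamma_{v\in V}M_v$. Then for each vertex $v$, each element of $M$ has exactly one final $v$-component and exactly one final $v$-complement.
   Context: A graph $\Gamma=(V,E)$ has vertex set $V$ and irreflexive symmetric edge relation $E$. The graph product $M=\Gamma_{v\in V}M_v$ of pairwise disjoint monoids $M_v$ is the quotient of their free product by the congruence generated by $(mn,nm)$ for $m\in M_u$, $n\in M_v$, $(u,v)\in E$; each $M_v$ is identified with its (isomorphic) image in $M$. Let $X$ be the disjoint union of the sets $M_v\setminus\{1\}$, and for $m\in M_v\setminus\{1\}$ set $C(m)=v$. A word $x_1\circ\cdots\circ x_n$ in the free monoid $X^*$ is an expression for the element $x_1x_2\cdots x_n$ of $M$. It is reduced if whenever $i<j$ and $C(x_i)=C(x_j)$ there is $k$ with $i<k<j$ and $(C(x_i),C(x_k))\notin E$. For $a,a'\in M$, $v\in V$ and $c\in M_v\setminus\{1\}$: $a$ has final $v$-component $c$ and final $v$-complement $a'$ if $a$ has a reduced expression $a_1\circ\cdots\circ a_m\circ c$ with $a_1\cdots a_m=a'$. Also, $a$ has final $v$-component $1$ and final $v$-complement $a$ if $a$ has a reduced expression $a_1\circ\cdots\circ a_m$ such that either (i) $C(a_j)\ne v$ for all $j$, or (ii) there is $k$ with $(C(a_k),v)\notin E$ and $C(a_j)\neq v$ for all $j\ge k$. *)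

From Stdlib Require Import List.
Import ListNotations.
Set Implicit Arguments.
Unset Strict Implicit.

Record monoid := Monoid {
  mcarrier :> Type;
  mone : mcarrier;
  mmul : mcarrier -> mcarrier -> mcarrier;
  mmulA : forall x y z, mmul x (mmul y z) = mmul (mmul x y) z;
  mmul1m : forall x, mmul mone x = x;
  mmulm1 : forall x, mmul x mone = x
}.

Section GraphProduct.
Variables (V : Type) (E : V -> V -> Prop) (M : V -> monoid).

Definition letter := {v : V & M v}.

Inductive gp_rel : list letter -> list letter -> Prop :=
| gp_rel_one v : gp_rel [existT _ v (mone (M v))] []
| gp_rel_mul v (m n : M v) :
    gp_rel [existT _ v m; existT _ v n] [existT _ v (mmul m n)]
| gp_rel_comm u v (m : M u) (n : M v) :
    E u v -> gp_rel [existT _ u m; existT _ v n] [existT _ v n; existT _ u m].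

Inductive gp_cong : list letter -> list letter -> Prop :=
| gp_cong_step p s l r : gp_rel l r -> gp_cong (p ++ l ++ s) (p ++ r ++ s)
| gp_cong_refl w : gp_cong w w
| gp_cong_sym w1 w2 : gp_cong w1 w2 -> gp_cong w2 w1
| gp_cong_trans w1 w2 w3 : gp_cong w1 w2 -> gp_cong w2 w3 -> gp_cong w1 w3.

Definition GP := {P : list letter -> Prop | exists w, P = gp_cong w}.

Definition gp_class (w : list letter) : GP :=
  exist _ (gp_cong w) (ex_intro _ w eq_refl).

Definition X := {v : V & {m : M v | m <> mone (M v)}}.
Definition C (x : X) : V := projT1 x.
Definition X_letter (x : X) : letter := existT _ (projT1 x) (proj1_sig (projT2 x)).

Definition eval (w : list X) : GP := gp_class (map X_letter w).

Definition reduced (w : list X) : Prop :=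
  forall p x q y r, w = p ++ x :: q ++ y :: r -> C x = C y ->
    exists q1 z q2, q = q1 ++ z :: q2 /\ ~ E (C x) (C z).

(* [final v a c a'] : a has final v-component c and final v-complement a'. *)
Definition final (v : V) (a : GP) (c : M v) (a' : GP) : Prop :=
  (exists (h : c <> mone (M v)) (w : list X),
      reduced (w ++ [existT _ v (exist _ c h)]) /\
      eval (w ++ [existT _ v (exist _ c h)]) = a /\ eval w = a')
  \/
  (c = mone (M v) /\ a' = a /\
   exists w : list X, reduced w /\ eval w = a /\
     ((forall x, In x w -> C x <> v) \/
      (exists p z s, w = p ++ z :: s /\ ~ E (C z) v /\
                     forall x, In x (z :: s) -> C x <> v))).

End GraphProduct.

(* Reduced words related by commuting adjacent letters on adjacent vertices
   ("shuffles") represent the same element.  Right multiplication of a reduced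
   word by a letter of M_u is defined explicitly: if some u-letter can be
   shuffled to the end, the new letter is multiplied into it (and erased if the
   product is 1), otherwise it is appended.  This is well defined on shuffle
   classes and respects the defining relations of M, so it is an action of M
   in which a reduced word w is reached from the empty word by acting with its
   own letters.  Hence two reduced expressions of the same element are shuffles
   of each other, and the final v-letter of a reduced word, together with the
   word left after deleting it, is invariant under shuffles. *)

From Stdlib Require Import List Classical Eqdep ProofIrrelevance FunctionalExtensionality PropExtensionality.
Import ListNotations.

Section GraphProductNormalForm.
Variables (V : Type) (E : V -> V -> Prop) (M : V -> monoid).
Hypothesis E_sym : forall u v, E u v -> E v u.
Hypothesis E_irr : forall v, ~ E v v.

Notation word := (list (X M)).

Lemma Forall_E_sym u (s : list V) : Forall (fun a => E a u) s -> Forall (E u) s.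
Proof. apply Forall_impl. auto. Qed.

Definition unreduced (l : list V) :=
  exists p a q r, l = p ++ a :: q ++ a :: r /\ Forall (E a) q.

Definition last_shiftable u (l : list V) :=
  exists p s, l = p ++ u :: s /\ Forall (fun a => E a u) s.

Lemma unreduced_prefix l1 l2 : ~ unreduced (l1 ++ l2) -> ~ unreduced l1.
Proof.
  intros Hb [p [a [q [r [-> H]]]]]. apply Hb. exists p, a, q, (r ++ l2).
  split; auto. rewrite <- !app_assoc. simpl. rewrite <- app_assoc. reflexivity.
Qed.

Lemma unreduced_snoc l u :
  ~ unreduced (l ++ [u]) <-> ~ unreduced l /\ ~ last_shiftable u l.
Proof.
  split.
  - intros Hb. split; [exact (unreduced_prefix _ _ Hb)|].
    intros [p [s [-> Hs]]]. apply Hb. exists p, u, s, [].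
    split; [rewrite <- app_assoc; reflexivity | apply Forall_E_sym; auto].
  - intros [Hb Hf] [p [a [q [r [Heq H]]]]].
    destruct r as [|b r' _] using rev_ind.
    + assert (Heq' : l ++ [u] = (p ++ a :: q) ++ [a])
        by (rewrite Heq, <- app_assoc; reflexivity).
      apply app_inj_tail in Heq' as [-> <-]. apply Hf. exists p, q. split; auto.
      eapply Forall_impl; [|exact H]. simpl. auto.
    + assert (Heq' : l ++ [u] = (p ++ a :: q ++ a :: r') ++ [b]).
      { rewrite Heq. rewrite <- !app_assoc. simpl. rewrite <- !app_assoc. reflexivity. }
      apply app_inj_tail in Heq' as [-> _]. apply Hb. exists p, a, q, r'. auto.
Qed.

Lemma unreduced_delete_shiftable p u s : ~ unreduced (p ++ u :: s) ->
  Forall (fun a => E a u) s -> ~ unreduced (p ++ s).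
Proof.
  intros Hb Hs [p1 [a [q [r [Heq Hq]]]]].
  apply app_eq_app in Heq as [l [[Hp Hl]|[Hp Hl]]].
  - destruct l as [|a' l'].
    + simpl in Hl. subst. rewrite app_nil_r in Hb. apply Hb. exists (p1 ++ [u]), a, q, r.
      split; auto. rewrite <- app_assoc. reflexivity.
    + simpl in Hl. injection Hl as <- Hl.
      apply app_eq_app in Hl as [l2 [[Hq1 Hl2]|[Hq1 Hl2]]].
      * subst. apply Hb. exists p1, a, (l' ++ u :: l2), r. split.
        -- repeat (rewrite <- app_assoc; simpl). reflexivity.
        -- apply Forall_app in Hq as [H1 H2]. apply Forall_app. split; auto.
           constructor; auto.
           apply Forall_app in Hs as [_ Hs']. exact (Forall_inv Hs').
      * destruct l2 as [|b l3].
        -- simpl in Hl2. rewrite app_nil_r in Hq1. subst. apply Hb.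
           exists p1, a, (q ++ [u]), r. split.
           ++ rewrite <- !app_assoc. reflexivity.
           ++ apply Forall_app. split; auto. constructor; auto. exact (Forall_inv Hs).
        -- simpl in Hl2. injection Hl2 as <- Hl3. subst. apply Hb.
           exists p1, a, q, (l3 ++ u :: s). split; auto.
           rewrite <- !app_assoc. simpl. rewrite <- !app_assoc. reflexivity.
  - subst. apply Hb. exists (p ++ u :: l), a, q, r. split; auto.
    rewrite <- app_assoc. reflexivity.
Qed.

Lemma last_shiftable_delete p u s : ~ unreduced (p ++ u :: s) ->
  Forall (fun a => E a u) s -> ~ last_shiftable u (p ++ s).
Proof.
  intros Hb Hs [p' [s' [Heq Hs']]].
  apply app_eq_app in Heq as [l [[Hp Hl]|[Hp Hl]]].
  - destruct l as [|b l'].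
    + simpl in Hl. subst. apply (E_irr u). exact (Forall_inv Hs).
    + simpl in Hl. injection Hl as <- Hl. subst. apply Hb.
      exists p', u, l', s. split.
      * rewrite <- app_assoc. reflexivity.
      * apply Forall_E_sym. apply Forall_app in Hs' as [H1 _]. exact H1.
  - subst. rewrite Forall_forall in Hs. apply (E_irr u). apply Hs.
    apply in_or_app. right. simpl. auto.
Qed.

Lemma reduced_iff (w : word) : reduced E w <-> ~ unreduced (map (@C V M) w).
Proof.
  split.
  - intros Hr [p [a [q [r [Heq HF]]]]].
    apply map_eq_app in Heq as [p' [l2 [-> [_ H2]]]].
    apply map_eq_cons in H2 as [x [tl [-> [Hx H3]]]].
    apply map_eq_app in H3 as [q' [l3 [-> [Hq H4]]]].
    apply map_eq_cons in H4 as [y [r' [-> [Hy _]]]].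
    destruct (Hr p' x q' y r' eq_refl) as [q1 [z [q2 [-> Hz]]]]; [congruence|].
    apply Hz. subst. rewrite Forall_forall in HF. apply HF.
    rewrite map_app. apply in_or_app. right. simpl. auto.
  - intros Hb p x q y r Heq Hxy.
    destruct (classic (exists z, In z q /\ ~ E (C x) (C z))) as [[z [Hz Hn]]|Hn].
    + apply in_split in Hz as [q1 [q2 ->]]. eauto.
    + exfalso. apply Hb.
      exists (map (@C V M) p), (C x), (map (@C V M) q), (map (@C V M) r). split.
      * subst w. rewrite !map_app. simpl. rewrite map_app. simpl. rewrite Hxy. reflexivity.
      * rewrite Forall_forall. intros b Hb'. apply in_map_iff in Hb' as [z [<- Hz]].
        apply NNPP. intro. apply Hn. eauto.
Qed.

Definition final_letter u (w p : word) (x : X M) s :=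
  w = p ++ x :: s /\ C x = u /\ Forall (fun y => E (C y) u) s.

Definition no_final_letter u (w : word) := forall p x s, ~ final_letter u w p x s.

Lemma final_letter_dec u w :
  (exists p x s, final_letter u w p x s) \/ no_final_letter u w.
Proof.
  destruct (classic (exists p x s, final_letter u w p x s)) as [H|H]; [left; exact H|].
  right. intros p x s Hf. apply H. eauto.
Qed.

Lemma no_final_letter_iff u w :
  no_final_letter u w <-> ~ last_shiftable u (map (@C V M) w).
Proof.
  split.
  - intros Hn [p [s [Heq Hs]]].
    apply map_eq_app in Heq as [p' [l2 [-> [Hp H2]]]].
    apply map_eq_cons in H2 as [x [s' [-> [Hx Hs']]]].
    apply (Hn p' x s'). split; auto. split; auto. subst s. apply Forall_map in Hs. exact Hs.
  - intros Hn p x s [-> [Hx Hs]]. apply Hn. exists (map (@C V M) p), (map (@C V M) s).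
    rewrite map_app. simpl. rewrite Hx. split; auto. apply Forall_map. exact Hs.
Qed.

Lemma final_letter_unique u w p x s p' x' s' :
  final_letter u w p x s -> final_letter u w p' x' s' -> p = p' /\ x = x' /\ s = s'.
Proof.
  intros [-> [Hx Hs]] [Heq [Hx' Hs']].
  apply app_eq_app in Heq as [l [[Hp Hl]|[Hp Hl]]]; destruct l as [|y l'];
    simpl in Hl; try (rewrite app_nil_r in Hp; injection Hl as <- <-; auto).
  - injection Hl as <- ->. exfalso. rewrite Forall_forall in Hs'.
    apply (E_irr u). rewrite <- Hx at 1. apply Hs'. apply in_or_app. right. simpl. auto.
  - injection Hl as <- ->. exfalso. rewrite Forall_forall in Hs.
    apply (E_irr u). rewrite <- Hx' at 1. apply Hs. apply in_or_app. right. simpl. auto.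
Qed.

Lemma reduced_snoc (w : word) x :
  reduced E (w ++ [x]) <-> reduced E w /\ no_final_letter (C x) w.
Proof. rewrite !reduced_iff, no_final_letter_iff, map_app. apply unreduced_snoc. Qed.

Lemma reduced_delete_final (p : word) x s : reduced E (p ++ x :: s) ->
  Forall (fun y => E (C y) (C x)) s ->
  reduced E (p ++ s) /\ no_final_letter (C x) (p ++ s).
Proof.
  rewrite !reduced_iff, no_final_letter_iff, !map_app. simpl. intros H1 H2.
  apply (proj2 (Forall_map (@C V M) (fun a => E a (C x)) s)) in H2.
  split; [exact (unreduced_delete_shiftable _ _ _ H1 H2)
         | exact (last_shiftable_delete _ _ _ H1 H2)].
Qed.

Lemma reduced_replace (p : word) x x' s :
  reduced E (p ++ x :: s) -> C x' = C x -> reduced E (p ++ x' :: s).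
Proof. rewrite !reduced_iff, !map_app. simpl. intros H ->. exact H. Qed.

Lemma reduced_nil : reduced E (@nil (X M)).
Proof. intros p x q y r H. destruct p; discriminate. Qed.

Inductive swap : word -> word -> Prop :=
| swap_adj a y z b : E (C y) (C z) -> swap (a ++ y :: z :: b) (a ++ z :: y :: b).

Inductive shuffle : word -> word -> Prop :=
| shuffle_refl w : shuffle w w
| shuffle_step w1 w2 w3 : swap w1 w2 -> shuffle w2 w3 -> shuffle w1 w3.

Lemma swap_sym w1 w2 : swap w1 w2 -> swap w2 w1.
Proof. intros []. constructor. auto. Qed.

Lemma swap_shuffle w1 w2 : swap w1 w2 -> shuffle w1 w2.
Proof. eauto using shuffle. Qed.

Lemma shuffle_trans w1 w2 w3 : shuffle w1 w2 -> shuffle w2 w3 -> shuffle w1 w3.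
Proof. induction 1; eauto using shuffle. Qed.

Lemma shuffle_sym w1 w2 : shuffle w1 w2 -> shuffle w2 w1.
Proof.
  induction 1; [constructor|].
  eapply shuffle_trans; [exact IHshuffle|]. apply swap_shuffle, swap_sym; auto.
Qed.

Lemma swap_app_r w1 w2 t : swap w1 w2 -> swap (w1 ++ t) (w2 ++ t).
Proof. intros []. rewrite <- !app_assoc. simpl. constructor. auto. Qed.

Lemma shuffle_to_end p x s : Forall (fun y => E (C y) (C x)) s ->
  shuffle (p ++ x :: s) (p ++ s ++ [x]).
Proof.
  revert p. induction s as [|y s IH]; intros p Hs; [constructor|].
  inversion Hs; subst. eapply shuffle_step.
  - constructor. apply E_sym. eassumption.
  - replace (p ++ (y :: s) ++ [x]) with ((p ++ [y]) ++ s ++ [x])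
      by (rewrite <- app_assoc; reflexivity).
    replace (p ++ y :: x :: s) with ((p ++ [y]) ++ x :: s)
      by (rewrite <- app_assoc; reflexivity).
    apply IH. auto.
Qed.

Ltac app_norm := repeat (rewrite <- app_assoc; simpl); try reflexivity.

Lemma swap_final_letter u w1 w2 p x s : swap w1 w2 -> final_letter u w1 p x s ->
  exists p' s', final_letter u w2 p' x s' /\ shuffle (p ++ s) (p' ++ s') /\
    forall x', C x' = u -> shuffle (p ++ x' :: s) (p' ++ x' :: s').
Proof.
  intros [a y z b Hyz] [Heq [Hx Hs]].
  apply app_eq_app in Heq as [l [[Ha Hl]|[Hp Hl]]]; destruct l as [|x0 l'];
    simpl in Hl; rewrite ?app_nil_r in *; [subst p|subst a|subst p|subst p].
  1,3: injection Hl; intros; subst; inversion Hs; subst; exists (a ++ [z]), b;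
    split; [split; [app_norm|auto]|split; [app_norm; constructor|]];
    intros x' Hx'; app_norm; apply swap_shuffle; constructor; rewrite Hx'; auto.
  - injection Hl as -> ->. exists p, (l' ++ z :: y :: b).
    apply Forall_app in Hs as [H1 H2]. inversion H2; subst. inversion H4; subst.
    split; [split; [app_norm|split; auto; apply Forall_app; auto]|split].
    + rewrite !app_assoc. apply swap_shuffle. constructor. auto.
    + intros x' Hx'.
      replace (p ++ x' :: l' ++ y :: z :: b) with ((p ++ x' :: l') ++ y :: z :: b) by app_norm.
      replace (p ++ x' :: l' ++ z :: y :: b) with ((p ++ x' :: l') ++ z :: y :: b) by app_norm.
      apply swap_shuffle. constructor. auto.
  - injection Hl as <- Hl. destruct l' as [|z0 l''].
    + injection Hl as <- <-. exists a, (y :: b).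
      split; [split; [reflexivity|split; auto; constructor; auto; subst; auto]|split].
      * app_norm. constructor.
      * intros x' Hx'. app_norm. apply swap_shuffle. constructor. rewrite Hx', <- Hx. exact Hyz.
    + injection Hl as <- ->. exists (a ++ z :: y :: l''), s.
      split; [split; [app_norm|auto]|split];
        [|intros x' Hx']; app_norm; apply swap_shuffle; constructor; auto.
Qed.

Lemma swap_no_final_letter u w1 w2 : swap w1 w2 -> no_final_letter u w1 -> no_final_letter u w2.
Proof.
  intros Hsw Hn p x s Hf. apply swap_sym in Hsw.
  destruct (swap_final_letter _ _ _ _ _ _ Hsw Hf) as [p' [s' [Hf' _]]]. eapply Hn; eauto.
Qed.

Definition mkX u (c : M u) (h : c <> mone (M u)) : X M := existT _ u (exist _ c h).

Lemma mkX_eq u c c' h h' : c = c' -> mkX u c h = mkX u c' h'.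
Proof. intros ->. f_equal. apply proof_irrelevance. Qed.

Lemma mkX_inj u c c' h h' : mkX u c h = mkX u c' h' -> c = c'.
Proof. unfold mkX. intro H. apply inj_pair2 in H. exact (f_equal (@proj1_sig _ _) H). Qed.

Lemma letter_mkX u x : C x = u -> exists c hc, x = mkX u c hc.
Proof. destruct x as [u' [c hc]]. unfold C. simpl. intros <-. exists c, hc. reflexivity. Qed.

Definition mul_letter u (m : M u) (x : X M) (T : word) :=
  exists c hc, x = mkX u c hc /\
   ((exists h, T = [mkX u (mmul c m) h]) \/ (mmul c m = mone (M u) /\ T = [])).

Lemma mul_letter_exists u m x : C x = u -> exists T, mul_letter u m x T.
Proof.
  intros Hx. destruct (letter_mkX u x Hx) as [c [h ->]].
  destruct (classic (mmul c m = mone (M u))) as [H|H].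
  - exists [], c, h. split; auto.
  - exists [mkX u _ H], c, h. split; eauto.
Qed.

Lemma mul_letter_det u m x T T' : mul_letter u m x T -> mul_letter u m x T' -> T = T'.
Proof.
  intros [c [hc [-> H1]]] [c' [hc' [Heq H2]]]. apply mkX_inj in Heq. subst c'.
  destruct H1 as [[h1 ->]|[e1 ->]]; destruct H2 as [[h2 ->]|[e2 ->]];
    try contradiction; try reflexivity.
  f_equal. apply mkX_eq. reflexivity.
Qed.

Lemma mul_letter_vertex u m x T : mul_letter u m x T -> Forall (fun y => C y = u) T.
Proof. intros [c [hc [_ [[h ->]|[_ ->]]]]]; auto. Qed.

Lemma mul_letter_keep u m c hc h : mul_letter u m (mkX u c hc) [mkX u (mmul c m) h].
Proof. exists c, hc. split; eauto. Qed.

Lemma mul_letter_cancel u m c hc :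
  mmul c m = mone (M u) -> mul_letter u m (mkX u c hc) [].
Proof. intros. exists c, hc. split; eauto. Qed.

Lemma mul_letter_adj u u' n y T : mul_letter u' n y T -> E u' u ->
  Forall (fun z => E (C z) u) T.
Proof.
  intros HT He. apply mul_letter_vertex in HT.
  eapply Forall_impl; [|exact HT]. simpl. intros a ->. auto.
Qed.

Lemma mul_letter_shuffle u m x T p s p' s' : mul_letter u m x T ->
  shuffle (p ++ s) (p' ++ s') ->
  (forall x', C x' = u -> shuffle (p ++ x' :: s) (p' ++ x' :: s')) ->
  shuffle (p ++ T ++ s) (p' ++ T ++ s').
Proof. intros [c [hc [_ [[h ->]|[_ ->]]]]] H1 H2; simpl; auto. Qed.

Lemma final_letter_last u w x : C x = u -> final_letter u (w ++ [x]) w x [].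
Proof. intros. split; auto. Qed.

Lemma final_letter_snoc u w p x s z : final_letter u w p x s -> E (C z) u ->
  final_letter u (w ++ [z]) p x (s ++ [z]).
Proof.
  intros [-> [Hx Hs]] Hz. split; [rewrite <- app_assoc; reflexivity|]. split; auto.
  apply Forall_app. auto.
Qed.

Lemma no_final_letter_snoc u w x : no_final_letter u w -> C x <> u ->
  no_final_letter u (w ++ [x]).
Proof.
  intros Hn Hx P y S [Heq [Hy HS]].
  destruct S as [|z S' _] using rev_ind.
  - apply app_inj_tail in Heq as [_ ->]. auto.
  - assert (Heq' : w ++ [x] = (P ++ y :: S') ++ [z])
      by (rewrite Heq, <- app_assoc; reflexivity).
    apply app_inj_tail in Heq' as [-> _]. apply (Hn P y S').
    split; auto. split; auto. apply Forall_app in HS. tauto.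
Qed.

Lemma final_letters_order u u' w p x s P y S : u <> u' ->
  final_letter u w p x s -> final_letter u' w P y S ->
  (exists l, s = l ++ y :: S /\ P = p ++ x :: l) \/
  (exists l, p = P ++ y :: l /\ S = l ++ x :: s).
Proof.
  intros Hu [-> [Hx _]] [Heq [Hy _]].
  apply app_eq_app in Heq as [l [[Hp Hl]|[Hp Hl]]]; destruct l as [|z l'];
    simpl in Hl; injection Hl as Hz Hl; subst; try congruence; eauto.
Qed.

Lemma no_final_letter_replace u u' w p x s T : E u u' -> final_letter u w p x s ->
  no_final_letter u' w -> Forall (fun z => C z = u) T -> no_final_letter u' (p ++ T ++ s).
Proof.
  intros Huu [-> [Hx Hs]] Hn HT P y S [Heq [Hy HS]].
  assert (Hne : u <> u') by (intros <-; exact (E_irr _ Huu)).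
  apply app_eq_app in Heq as [l [[Hp Hl]|[Hp Hl]]].
  - destruct l as [|z l'].
    + simpl in Hl. rewrite app_nil_r in Hp. subst P. destruct T as [|t T'].
      * simpl in Hl. subst s. apply (Hn (p ++ [x]) y S).
        split; [rewrite <- app_assoc; reflexivity|]. auto.
      * simpl in Hl. injection Hl as <- _. inversion HT; subst. congruence.
    + simpl in Hl. injection Hl as <- ->. subst p.
      apply (Hn P y (l' ++ x :: s)). split; [rewrite <- app_assoc; reflexivity|].
      split; auto.
      apply Forall_app in HS as [H1 H2]. apply Forall_app in H2 as [_ H3].
      apply Forall_app. split; auto. constructor; auto. rewrite Hx. auto.
  - apply app_eq_app in Hl as [l2 [[HT2 Hl2]|[HT2 Hl2]]].
    + destruct l2 as [|z l3].
      * simpl in Hl2. subst s. apply (Hn (p ++ [x]) y S).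
        split; [rewrite <- app_assoc; reflexivity|]. auto.
      * simpl in Hl2. injection Hl2 as <- _. subst T. rewrite Forall_forall in HT.
        apply Hne. rewrite <- Hy. symmetry. apply HT. apply in_or_app. simpl. auto.
    + subst s. apply (Hn (p ++ x :: l2) y S).
      split; [rewrite <- app_assoc; reflexivity|]. auto.
Qed.

(* For reduced [w], [r] is a reduced expression of [eval w * l]. *)
Definition rmul (w : word) (l : letter M) (r : word) : Prop :=
  match l with existT _ u m =>
   (m = mone (M u) /\ r = w) \/
   (m <> mone (M u) /\ exists p x s T,
      final_letter u w p x s /\ mul_letter u m x T /\ r = p ++ T ++ s) \/
   (m <> mone (M u) /\ no_final_letter u w /\ exists h, r = w ++ [mkX u m h])
  end.

Notation L u m := (existT (fun v => mcarrier (M v)) u m).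

Lemma rmul_one u w : rmul w (L u (mone (M u))) w.
Proof. simpl. left. auto. Qed.

Lemma rmul_final u m w p x s T : m <> mone (M u) -> final_letter u w p x s ->
  mul_letter u m x T -> rmul w (L u m) (p ++ T ++ s).
Proof. intros. simpl. right. left. split; auto. exists p, x, s, T. auto. Qed.

Lemma rmul_append u m w h : no_final_letter u w -> rmul w (L u m) (w ++ [mkX u m h]).
Proof. intros. simpl. right. right. split; auto. split; eauto. Qed.

Lemma rmul_total w l : exists r, rmul w l r.
Proof.
  destruct l as [u m].
  destruct (classic (m = mone (M u))) as [->|Hm]; [eexists; apply rmul_one|].
  destruct (final_letter_dec u w) as [[p [x [s Hf]]]|Hn].
  - destruct (mul_letter_exists u m x (proj1 (proj2 Hf))) as [T HT].
    eexists. exact (rmul_final _ _ _ _ _ _ _ Hm Hf HT).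
  - eexists. exact (rmul_append u m w Hm Hn).
Qed.

Lemma rmul_det w l r r' : rmul w l r -> rmul w l r' -> r = r'.
Proof.
  destruct l as [u m].
  intros [[Hm ->]|[[Hm [p [x [s [T [Hf [HT ->]]]]]]]|[Hm [Hn [h ->]]]]]
         [[Hm' ->]|[[Hm' [p' [x' [s' [T' [Hf' [HT' ->]]]]]]]|[Hm' [Hn' [h' ->]]]]];
    try contradiction; auto.
  - destruct (final_letter_unique _ _ _ _ _ _ _ _ Hf Hf') as [<- [<- <-]].
    rewrite (mul_letter_det _ _ _ _ _ HT HT'). reflexivity.
  - exfalso. eapply Hn'; eauto.
  - exfalso. eapply Hn; eauto.
  - f_equal. f_equal. apply mkX_eq. reflexivity.
Qed.

Lemma rmul_final_inv w p x s u m r : final_letter u w p x s ->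
  rmul w (L u m) r -> exists T, mul_letter u m x T /\ r = p ++ T ++ s.
Proof.
  intros Hf H. destruct (mul_letter_exists u m x (proj1 (proj2 Hf))) as [T HT].
  exists T. split; auto.
  destruct (classic (m = mone (M u))) as [->|Hm].
  - rewrite (rmul_det _ _ _ _ H (rmul_one u w)). destruct Hf as [-> _].
    destruct HT as [c [hc [-> [[h ->]|[Hc _]]]]]; [|rewrite mmulm1 in Hc; contradiction].
    simpl. do 2 f_equal. apply mkX_eq. symmetry. apply mmulm1.
  - exact (rmul_det _ _ _ _ H (rmul_final _ _ _ _ _ _ _ Hm Hf HT)).
Qed.

Lemma rmul_append_inv w u m r (Hm : m <> mone (M u)) : no_final_letter u w ->
  rmul w (L u m) r -> r = w ++ [mkX u m Hm].
Proof. intros Hn H. exact (rmul_det _ _ _ _ H (rmul_append _ _ _ Hm Hn)). Qed.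

Lemma rmul_reduced w l r : reduced E w -> rmul w l r -> reduced E r.
Proof.
  intros Hr. destruct l as [u m].
  intros [[Hm ->]|[[Hm [p [x [s [T [Hf [HT ->]]]]]]]|[Hm [Hn [h ->]]]]]; auto.
  - destruct Hf as [-> [Hx Hs]]. destruct HT as [c [hc [Hxe [[h ->]|[_ ->]]]]].
    + simpl. eapply reduced_replace; eauto.
    + simpl. subst u. apply (reduced_delete_final _ _ _ Hr Hs).
  - apply reduced_snoc; auto.
Qed.

Lemma rmul_swap w1 w2 l r1 r2 : swap w1 w2 -> rmul w1 l r1 -> rmul w2 l r2 ->
  shuffle r1 r2.
Proof.
  intros Hsw H1 H2. destruct l as [u m].
  destruct H1 as [[Hm ->]|[[Hm [p [x [s [T [Hf [HT ->]]]]]]]|[Hm [Hn [h ->]]]]].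
  - subst m. rewrite (rmul_det _ _ _ _ H2 (rmul_one u w2)). apply swap_shuffle. auto.
  - destruct (swap_final_letter _ _ _ _ _ _ Hsw Hf) as [p' [s' [Hf' [S1 S2]]]].
    rewrite (rmul_det _ _ _ _ H2 (rmul_final _ _ _ _ _ _ _ Hm Hf' HT)).
    eapply mul_letter_shuffle; eauto.
  - assert (Hn' : no_final_letter u w2) by (eapply swap_no_final_letter; eauto).
    rewrite (rmul_det _ _ _ _ H2 (rmul_append _ _ _ h Hn')).
    apply swap_shuffle, swap_app_r. auto.
Qed.

Lemma rmul_shuffle w1 w2 l r1 r2 : shuffle w1 w2 -> rmul w1 l r1 -> rmul w2 l r2 ->
  shuffle r1 r2.
Proof.
  intros Hs. revert r1 r2. induction Hs; intros r1 r2 H1 H2.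
  - rewrite (rmul_det _ _ _ _ H1 H2). constructor.
  - destruct (rmul_total w2 l) as [r Hr]. eapply shuffle_trans.
    + eapply rmul_swap; eauto.
    + eapply IHHs; eauto.
Qed.

Lemma mul_letter_assoc u m n c hc h T : mul_letter u n (mkX u (mmul c m) h) T ->
  mul_letter u (mmul m n) (mkX u c hc) T.
Proof.
  intros [c' [hc' [Heq HT]]]. apply mkX_inj in Heq. subst c'.
  exists c, hc. split; auto. rewrite mmulA.
  destruct HT as [[h' ->]|[e ->]]; [left; eauto|right; auto].
Qed.

Lemma rmul_mul_cancel u m n w w1 w2 w3 p c hc s : n <> mone (M u) -> reduced E w ->
  final_letter u w p (mkX u c hc) s -> mmul c m = mone (M u) ->
  rmul w (L u m) w1 -> rmul w1 (L u n) w2 -> rmul w (L u (mmul m n)) w3 -> shuffle w2 w3.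
Proof.
  intros Hn Hr Hf Hcm H1 H2 H3. pose proof Hf as [Hw [_ Hs]].
  destruct (rmul_final_inv _ _ _ _ _ _ _ Hf H1) as [T1 [HT1 ->]].
  rewrite (mul_letter_det _ _ _ _ _ HT1 (mul_letter_cancel _ _ _ _ Hcm)) in H2.
  destruct (reduced_delete_final p (mkX u c hc) s) as [_ Hnf1]; [rewrite <- Hw; auto|exact Hs|].
  rewrite (rmul_append_inv _ _ _ _ Hn Hnf1 H2).
  assert (Hcmn : mmul c (mmul m n) = n) by (rewrite mmulA, Hcm, mmul1m; reflexivity).
  assert (h : mmul c (mmul m n) <> mone (M u)) by (rewrite Hcmn; exact Hn).
  destruct (rmul_final_inv _ _ _ _ _ _ _ Hf H3) as [T3 [HT3 ->]].
  rewrite (mul_letter_det _ _ _ _ _ HT3 (mul_letter_keep _ _ _ _ h)), <- app_assoc.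
  rewrite (mkX_eq _ _ _ h Hn Hcmn). apply shuffle_sym, shuffle_to_end. exact Hs.
Qed.

Lemma rmul_mul_merge u m n w w1 w2 w3 p c hc s :
  final_letter u w p (mkX u c hc) s -> mmul c m <> mone (M u) ->
  rmul w (L u m) w1 -> rmul w1 (L u n) w2 -> rmul w (L u (mmul m n)) w3 -> shuffle w2 w3.
Proof.
  intros Hf Hcm H1 H2 H3. pose proof Hf as [_ [_ Hs]].
  destruct (rmul_final_inv _ _ _ _ _ _ _ Hf H1) as [T1 [HT1 ->]].
  rewrite (mul_letter_det _ _ _ _ _ HT1 (mul_letter_keep _ _ _ _ Hcm)) in H2.
  assert (Hf1 : final_letter u (p ++ [mkX u (mmul c m) Hcm] ++ s) p
                  (mkX u (mmul c m) Hcm) s) by (split; auto).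
  destruct (rmul_final_inv _ _ _ _ _ _ _ Hf1 H2) as [T2 [HT2 ->]].
  destruct (rmul_final_inv _ _ _ _ _ _ _ Hf H3) as [T3 [HT3 ->]].
  rewrite (mul_letter_det _ _ _ _ _ HT3 (mul_letter_assoc _ _ _ _ _ _ _ HT2)). constructor.
Qed.

Lemma rmul_mul_append u m n w w1 w2 w3 (Hm : m <> mone (M u)) : no_final_letter u w ->
  rmul w (L u m) w1 -> rmul w1 (L u n) w2 -> rmul w (L u (mmul m n)) w3 -> shuffle w2 w3.
Proof.
  intros Hnf H1 H2 H3. rewrite (rmul_append_inv _ _ _ _ Hm Hnf H1) in H2.
  destruct (rmul_final_inv _ _ _ _ _ _ _ (final_letter_last u w (mkX u m Hm) eq_refl) H2)
    as [T2 [HT2 ->]].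
  destruct (classic (mmul m n = mone (M u))) as [Hmn|Hmn].
  - rewrite (mul_letter_det _ _ _ _ _ HT2 (mul_letter_cancel _ _ _ _ Hmn)).
    rewrite Hmn in H3. rewrite (rmul_det _ _ _ _ H3 (rmul_one u w)), !app_nil_r. constructor.
  - rewrite (mul_letter_det _ _ _ _ _ HT2 (mul_letter_keep _ _ _ _ Hmn)).
    rewrite (rmul_append_inv _ _ _ _ Hmn Hnf H3), app_nil_r. constructor.
Qed.

Lemma rmul_mul w w1 w2 w3 u m n : reduced E w ->
  rmul w (L u m) w1 -> rmul w1 (L u n) w2 -> rmul w (L u (mmul m n)) w3 -> shuffle w2 w3.
Proof.
  intros Hr H1 H2 H3.
  destruct (classic (m = mone (M u))) as [->|Hm].
  { rewrite (rmul_det _ _ _ _ H1 (rmul_one u w)) in H2. rewrite mmul1m in H3.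
    rewrite (rmul_det _ _ _ _ H2 H3). constructor. }
  destruct (classic (n = mone (M u))) as [->|Hn].
  { rewrite mmulm1 in H3. rewrite (rmul_det _ _ _ _ H2 (rmul_one u w1)).
    rewrite (rmul_det _ _ _ _ H1 H3). constructor. }
  destruct (final_letter_dec u w) as [[p [x [s Hf]]]|Hnf].
  - destruct (letter_mkX u x (proj1 (proj2 Hf))) as [c [hc ->]].
    destruct (classic (mmul c m = mone (M u))) as [Hcm|Hcm].
    + exact (rmul_mul_cancel _ _ _ _ _ _ _ _ _ _ _ Hn Hr Hf Hcm H1 H2 H3).
    + exact (rmul_mul_merge _ _ _ _ _ _ _ _ _ _ _ Hf Hcm H1 H2 H3).
  - exact (rmul_mul_append _ _ _ _ _ _ _ Hm Hnf H1 H2 H3).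
Qed.

Lemma rmul_comm_ordered w w1 w2 w3 w4 u u' m n p x l y S : E u u' ->
  final_letter u w p x (l ++ y :: S) -> final_letter u' w (p ++ x :: l) y S ->
  rmul w (L u m) w1 -> rmul w1 (L u' n) w2 ->
  rmul w (L u' n) w3 -> rmul w3 (L u m) w4 -> w2 = w4.
Proof.
  intros Huu Hf Hf' H1 H2 H3 H4. pose proof Hf as [_ [Hx Hs]]. pose proof Hf' as [_ [Hy HS]].
  destruct (rmul_final_inv _ _ _ _ _ _ _ Hf H1) as [T1 [HT1 ->]].
  assert (Hf1 : final_letter u' (p ++ T1 ++ l ++ y :: S) (p ++ T1 ++ l) y S)
    by (split; [app_norm|auto]).
  destruct (rmul_final_inv _ _ _ _ _ _ _ Hf1 H2) as [T2 [HT2 ->]].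
  destruct (rmul_final_inv _ _ _ _ _ _ _ Hf' H3) as [T2' [HT2' ->]].
  rewrite (mul_letter_det _ _ _ _ _ HT2' HT2) in H4.
  assert (Hf3 : final_letter u ((p ++ x :: l) ++ T2 ++ S) p x (l ++ T2 ++ S)).
  { split; [app_norm|]. split; auto. apply Forall_app in Hs as [Hl HyS].
    inversion HyS; subst. apply Forall_app. split; auto. apply Forall_app. split; auto.
    eapply mul_letter_adj; eauto. }
  destruct (rmul_final_inv _ _ _ _ _ _ _ Hf3 H4) as [T1' [HT1' ->]].
  rewrite (mul_letter_det _ _ _ _ _ HT1' HT1). app_norm.
Qed.

Lemma rmul_comm_single w w1 w2 w3 w4 u u' m n p x s (Hn : n <> mone (M u')) : E u u' ->
  final_letter u w p x s -> no_final_letter u' w ->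
  rmul w (L u m) w1 -> rmul w1 (L u' n) w2 ->
  rmul w (L u' n) w3 -> rmul w3 (L u m) w4 -> w2 = w4.
Proof.
  intros Huu Hf Hnf H1 H2 H3 H4. pose proof Hf as [Hw [Hx Hs]].
  destruct (rmul_final_inv _ _ _ _ _ _ _ Hf H1) as [T1 [HT1 ->]].
  assert (Hn1 : no_final_letter u' (p ++ T1 ++ s))
    by (eapply no_final_letter_replace; eauto using mul_letter_vertex).
  rewrite (rmul_append_inv _ _ _ _ Hn Hn1 H2).
  rewrite (rmul_append_inv _ _ _ _ Hn Hnf H3) in H4.
  assert (Hf3 : final_letter u (w ++ [mkX u' n Hn]) p x (s ++ [mkX u' n Hn]))
    by (apply final_letter_snoc; auto).
  destruct (rmul_final_inv _ _ _ _ _ _ _ Hf3 H4) as [T1' [HT1' ->]].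
  rewrite (mul_letter_det _ _ _ _ _ HT1' HT1). app_norm.
Qed.

Lemma rmul_comm_none w w1 w2 w3 w4 u u' m n
  (Hm : m <> mone (M u)) (Hn : n <> mone (M u')) : E u u' ->
  no_final_letter u w -> no_final_letter u' w ->
  rmul w (L u m) w1 -> rmul w1 (L u' n) w2 ->
  rmul w (L u' n) w3 -> rmul w3 (L u m) w4 -> swap w2 w4.
Proof.
  intros Huu Hnf Hnf' H1 H2 H3 H4.
  assert (Hne : u <> u') by (intros <-; exact (E_irr _ Huu)).
  rewrite (rmul_append_inv _ _ _ _ Hm Hnf H1) in H2.
  rewrite (rmul_append_inv _ _ _ _ Hn Hnf' H3) in H4.
  rewrite (rmul_append_inv _ _ _ _ Hn (no_final_letter_snoc u' w (mkX u m Hm) Hnf' Hne) H2).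
  rewrite (rmul_append_inv _ _ _ _ Hm
             (no_final_letter_snoc u w (mkX u' n Hn) Hnf (not_eq_sym Hne)) H4).
  rewrite <- !app_assoc. constructor. auto.
Qed.

Lemma rmul_comm w w1 w2 w3 w4 u u' m n : E u u' ->
  rmul w (L u m) w1 -> rmul w1 (L u' n) w2 ->
  rmul w (L u' n) w3 -> rmul w3 (L u m) w4 -> shuffle w2 w4.
Proof.
  intros Huu H1 H2 H3 H4.
  assert (Hne : u <> u') by (intros <-; exact (E_irr _ Huu)).
  destruct (classic (m = mone (M u))) as [->|Hm].
  { rewrite (rmul_det _ _ _ _ H1 (rmul_one u w)) in H2.
    rewrite (rmul_det _ _ _ _ H4 (rmul_one u w3)), (rmul_det _ _ _ _ H2 H3). constructor. }
  destruct (classic (n = mone (M u'))) as [->|Hn].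
  { rewrite (rmul_det _ _ _ _ H3 (rmul_one u' w)) in H4.
    rewrite (rmul_det _ _ _ _ H2 (rmul_one u' w1)), (rmul_det _ _ _ _ H1 H4). constructor. }
  destruct (final_letter_dec u w) as [[p [x [s Hf]]]|Hnf];
  destruct (final_letter_dec u' w) as [[P [y [S Hf']]]|Hnf'].
  - destruct (final_letters_order _ _ _ _ _ _ _ _ _ Hne Hf Hf')
      as [[l [-> ->]]|[l [-> ->]]].
    + rewrite (rmul_comm_ordered _ _ _ _ _ _ _ _ _ _ _ _ _ _ Huu Hf Hf' H1 H2 H3 H4).
      constructor.
    + rewrite (rmul_comm_ordered _ _ _ _ _ _ _ _ _ _ _ _ _ _ (E_sym _ _ Huu) Hf' Hf H3 H4 H1 H2).
      constructor.
  - rewrite (rmul_comm_single _ _ _ _ _ _ _ _ _ _ _ _ Hn Huu Hf Hnf' H1 H2 H3 H4).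
    constructor.
  - rewrite (rmul_comm_single _ _ _ _ _ _ _ _ _ _ _ _ Hm (E_sym _ _ Huu) Hf' Hnf H3 H4 H1 H2).
    constructor.
  - apply swap_shuffle. exact (rmul_comm_none _ _ _ _ _ _ _ _ _ Hm Hn Huu Hnf Hnf' H1 H2 H3 H4).
Qed.

Lemma gp_cong_rel (p l r s : list (letter M)) {w1 w2 : list (letter M)} : gp_rel E l r -> w1 = p ++ l ++ s -> w2 = p ++ r ++ s ->
  gp_cong E w1 w2.
Proof. intros H -> ->. apply gp_cong_step. exact H. Qed.

Lemma gp_cong_app_r (w1 w2 t : list (letter M)) :
  gp_cong E w1 w2 -> gp_cong E (w1 ++ t) (w2 ++ t).
Proof.
  induction 1; eauto using gp_cong.
  apply (gp_cong_rel p l r (s ++ t)); auto; rewrite <- !app_assoc; reflexivity.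
Qed.

Lemma gp_cong_commute (P : list (letter M)) u a (S : word) Tl :
  Forall (fun y => E u (C y)) S ->
  gp_cong E (P ++ L u a :: map (@X_letter V M) S ++ Tl)
            (P ++ map (@X_letter V M) S ++ L u a :: Tl).
Proof.
  revert P. induction S as [|y S IH]; intros P HS; [apply gp_cong_refl|].
  inversion HS; subst. eapply gp_cong_trans.
  - apply (gp_cong_rel P _ _ (map (@X_letter V M) S ++ Tl)
             (gp_rel_comm (E:=E) a (proj1_sig (projT2 y)) H1)); reflexivity.
  - specialize (IH (P ++ [X_letter y]) H2). rewrite <- !app_assoc in IH. exact IH.
Qed.

Lemma rmul_sound r r' l : rmul r l r' ->
  gp_cong E (map (@X_letter V M) r') (map (@X_letter V M) r ++ [l]).
Proof.
  destruct l as [u m].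
  intros [[Hm ->]|[[Hm [p [x [s [T [Hf [HT ->]]]]]]]|[Hm [Hn [h ->]]]]].
  - subst m. apply gp_cong_sym.
    apply (gp_cong_rel (map (@X_letter V M) r) _ _ [] (gp_rel_one E M u));
      rewrite ?app_nil_r; reflexivity.
  - destruct Hf as [-> [Hx Hs]]. destruct HT as [c [hc [-> HT]]].
    assert (Hs' : Forall (fun y => E u (C y)) s) by (eapply Forall_impl; [|exact Hs]; simpl; auto).
    apply gp_cong_sym. rewrite !map_app. simpl. rewrite <- app_assoc. simpl.
    eapply gp_cong_trans; [exact (gp_cong_commute _ u c s [L u m] Hs')|].
    eapply gp_cong_trans.
    { apply (gp_cong_rel (map (@X_letter V M) p ++ map (@X_letter V M) s) _ _ []
               (gp_rel_mul E c m)); [app_norm|reflexivity]. }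
    destruct HT as [[h ->]|[Hcm ->]].
    + rewrite <- !app_assoc. simpl. apply gp_cong_sym.
      pose proof (gp_cong_commute (map (@X_letter V M) p) u (mmul c m) s [] Hs') as G.
      rewrite app_nil_r in G. exact G.
    + rewrite Hcm.
      apply (gp_cong_rel (map (@X_letter V M) p ++ map (@X_letter V M) s) _ _ []
               (gp_rel_one E M u)); [reflexivity|]. simpl. rewrite !app_nil_r. reflexivity.
  - rewrite map_app. apply gp_cong_refl.
Qed.

Inductive rmul_word : word -> list (letter M) -> word -> Prop :=
| rmul_word_nil w : rmul_word w [] w
| rmul_word_cons w l ls w1 w2 :
    rmul w l w1 -> rmul_word w1 ls w2 -> rmul_word w (l :: ls) w2.

Lemma rmul_word_total w ls : exists r, rmul_word w ls r.
Proof.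
  revert w. induction ls as [|l ls IH]; intro w; [eexists; constructor|].
  destruct (rmul_total w l) as [w1 H1]. destruct (IH w1) as [r Hr].
  eexists. econstructor; eauto.
Qed.

Lemma rmul_word_det w ls r r' : rmul_word w ls r -> rmul_word w ls r' -> r = r'.
Proof.
  intros H. revert r'. induction H as [|w l ls w1 w2 H1 _ IH]; intros r' H'; inversion H'; subst.
  - reflexivity.
  - rewrite (rmul_det _ _ _ _ H1 H3) in IH. auto.
Qed.

Lemma rmul_word_reduced w ls r : reduced E w -> rmul_word w ls r -> reduced E r.
Proof. intros Hw H. induction H; eauto using rmul_reduced. Qed.

Lemma rmul_word_app w ls1 ls2 r : rmul_word w (ls1 ++ ls2) r ->
  exists w1, rmul_word w ls1 w1 /\ rmul_word w1 ls2 r.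
Proof.
  revert w. induction ls1 as [|l ls1 IH]; intros w H; [exists w; split; auto; constructor|].
  inversion H; subst. destruct (IH _ H5) as [w2 [Ha Hb]]. exists w2. split; eauto using rmul_word.
Qed.

Lemma rmul_word_snoc w ls l w1 w2 : rmul_word w ls w1 -> rmul w1 l w2 ->
  rmul_word w (ls ++ [l]) w2.
Proof. induction 1; simpl; eauto using rmul_word. Qed.

Lemma rmul_word_shuffle w1 w2 ls r1 r2 : shuffle w1 w2 ->
  rmul_word w1 ls r1 -> rmul_word w2 ls r2 -> shuffle r1 r2.
Proof.
  intros Hs H1. revert w2 r2 Hs. induction H1 as [|w l ls w1 r1 H1 _ IH];
    intros w2 r2 Hs H2; inversion H2; subst; eauto using rmul_shuffle.
Qed.

Lemma rmul_word_sound w ls r : rmul_word w ls r ->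
  gp_cong E (map (@X_letter V M) r) (map (@X_letter V M) w ++ ls).
Proof.
  induction 1 as [w|w l ls w1 w2 H1 _ IH]; [rewrite app_nil_r; apply gp_cong_refl|].
  eapply gp_cong_trans; [exact IH|].
  change (l :: ls) with ([l] ++ ls). rewrite app_assoc. apply gp_cong_app_r.
  exact (rmul_sound _ _ _ H1).
Qed.

Lemma rmul_word_gp_rel l0 r0 w a b : gp_rel E l0 r0 -> reduced E w ->
  rmul_word w l0 a -> rmul_word w r0 b -> shuffle a b.
Proof.
  intros Hrel Hr Ha Hb.
  destruct Hrel as [u|u m n|u u' m n Huu];
    repeat match goal with
    | H : rmul_word _ (_ :: _) _ |- _ => inversion H; subst; clear H
    | H : rmul_word _ [] _ |- _ => inversion H; subst; clear H
    end.
  - assert (a = b) as -> by (eapply rmul_det; eauto using rmul_one). constructor.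
  - eapply rmul_mul; eauto.
  - eapply rmul_comm; eauto.
Qed.

Lemma rmul_word_gp_cong ls1 ls2 : gp_cong E ls1 ls2 ->
  forall w a b, reduced E w -> rmul_word w ls1 a -> rmul_word w ls2 b -> shuffle a b.
Proof.
  induction 1 as [p s l r Hlr|ls|ls1 ls2 _ IH|ls1 ls2 ls3 _ IH1 _ IH2];
    intros w a b Hw Ha Hb.
  - apply rmul_word_app in Ha as [w1 [Hp Ha]]. apply rmul_word_app in Ha as [a1 [Hl Ha]].
    apply rmul_word_app in Hb as [w1' [Hp' Hb]]. apply rmul_word_app in Hb as [b1 [Hr Hb]].
    rewrite <- (rmul_word_det _ _ _ _ Hp Hp') in Hr.
    pose proof (rmul_word_gp_rel _ _ _ _ _ Hlr (rmul_word_reduced _ _ _ Hw Hp) Hl Hr).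
    eapply rmul_word_shuffle; eauto.
  - rewrite (rmul_word_det _ _ _ _ Ha Hb). constructor.
  - apply shuffle_sym. eauto.
  - destruct (rmul_word_total w ls2) as [c Hc]. eapply shuffle_trans; eauto.
Qed.

Lemma rmul_word_of_reduced W : reduced E W -> rmul_word [] (map (@X_letter V M) W) W.
Proof.
  induction W as [|x W IH] using rev_ind; intro Hr; [constructor|].
  apply reduced_snoc in Hr as [Hr Hn]. rewrite map_app.
  eapply rmul_word_snoc; [exact (IH Hr)|].
  destruct x as [u [m h]]. exact (rmul_append u m W h Hn).
Qed.

Lemma gp_class_eq (w1 w2 : list (letter M)) : gp_cong E w1 w2 -> gp_class E w1 = gp_class E w2.
Proof.
  intro H. apply subset_eq_compat, functional_extensionality. intro w.
  apply propositional_extensionality.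
  split; intro H'; eauto using gp_cong.
Qed.

Lemma eval_gp_cong (W1 W2 : word) : eval E W1 = eval E W2 ->
  gp_cong E (map (@X_letter V M) W1) (map (@X_letter V M) W2).
Proof.
  intro H. apply (f_equal (@proj1_sig _ _)) in H. simpl in H. rewrite H. apply gp_cong_refl.
Qed.

Lemma eval_shuffle (W1 W2 : word) : shuffle W1 W2 -> eval E W1 = eval E W2.
Proof.
  induction 1 as [|w1 w2 w3 [a y z b Hyz] _ IH]; [reflexivity|]. rewrite <- IH.
  apply gp_class_eq. rewrite !map_app. simpl.
  apply (gp_cong_rel (map (@X_letter V M) a) _ _ (map (@X_letter V M) b)
     (gp_rel_comm (E:=E) (proj1_sig (projT2 y)) (proj1_sig (projT2 z)) Hyz)); reflexivity.
Qed.

Theorem reduced_eval_shuffle (W1 W2 : word) : reduced E W1 -> reduced E W2 ->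
  eval E W1 = eval E W2 -> shuffle W1 W2.
Proof.
  intros H1 H2 Heq.
  exact (rmul_word_gp_cong _ _ (eval_gp_cong _ _ Heq) [] W1 W2 reduced_nil
           (rmul_word_of_reduced _ H1) (rmul_word_of_reduced _ H2)).
Qed.

Lemma reduced_word_exists (a : GP E M) : exists W, reduced E W /\ eval E W = a.
Proof.
  destruct a as [Pa [ls ->]]. destruct (rmul_word_total [] ls) as [W HW].
  exists W. split; [exact (rmul_word_reduced _ _ _ reduced_nil HW)|].
  exact (gp_class_eq _ _ (rmul_word_sound _ _ _ HW)).
Qed.

Lemma split_last_occurrence (P : X M -> Prop) (r : word) : (exists x, In x r /\ P x) ->
  exists p y s, r = p ++ y :: s /\ P y /\ Forall (fun z => ~ P z) s.
Proof.
  induction r as [|x r IH] using rev_ind; intros [z [Hz Pz]]; [destruct Hz|].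
  destruct (classic (P x)) as [Px|nPx]; [exists r, x, []; auto|].
  apply in_app_or in Hz as [Hz|[<-|[]]]; [|contradiction].
  destruct (IH (ex_intro _ z (conj Hz Pz))) as [p [y [s [-> [Py Hs]]]]].
  exists p, y, (s ++ [x]). split; [rewrite <- app_assoc; reflexivity|]. split; auto.
  apply Forall_app. auto.
Qed.

Lemma no_final_letter_iff_blocked v w : no_final_letter v w <->
  (forall x, In x w -> C x <> v) \/
  (exists p z s, w = p ++ z :: s /\ ~ E (C z) v /\ forall x, In x (z :: s) -> C x <> v).
Proof.
  split.
  - intros Hnf.
    destruct (classic (exists x, In x w /\ C x = v)) as [Hex|Hno];
      [|left; intros x Hx Hc; apply Hno; eauto].
    destruct (split_last_occurrence _ _ Hex) as [p [y [s [Hw [Hy Hs]]]]].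
    assert (Hz : exists z, In z s /\ ~ E (C z) v).
    { apply NNPP. intro Hc. apply (Hnf p y s). split; auto. split; auto.
      rewrite Forall_forall. intros z Hz. apply NNPP. intro. apply Hc. eauto. }
    destruct Hz as [z [Hz Hnz]]. apply in_split in Hz as [s1 [s2 ->]].
    right. exists (p ++ y :: s1), z, s2. split; [rewrite Hw, <- app_assoc; reflexivity|].
    split; auto. intros x Hx. rewrite Forall_forall in Hs. apply Hs. apply in_or_app. auto.
  - intros Hcase P x S [Heq [Hx HS]].
    destruct Hcase as [Hall|[p [z [s [-> [Hz Hzs]]]]]].
    + apply (Hall x); auto. rewrite Heq. apply in_or_app. simpl. auto.
    + apply app_eq_app in Heq as [l [[Hp Hl]|[Hp Hl]]].
      * destruct l as [|y l']; simpl in Hl; injection Hl as <- Hl.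
        -- apply (Hzs x); simpl; auto.
        -- subst. rewrite Forall_forall in HS. apply Hz. apply HS.
           apply in_or_app. simpl. auto.
      * apply (Hzs x); auto. rewrite Hl. apply in_or_app. simpl. auto.
Qed.

Definition final_in v (W : word) (c : M v) (a' : GP E M) :=
  (exists p s h, final_letter v W p (mkX v c h) s /\ a' = eval E (p ++ s)) \/
  (c = mone (M v) /\ a' = eval E W /\ no_final_letter v W).

Lemma final_in_shuffle v (W1 W2 : word) c a' : shuffle W1 W2 ->
  final_in v W1 c a' -> final_in v W2 c a'.
Proof.
  induction 1 as [|w1 w2 w3 Hsw _ IH]; auto. intro H. apply IH.
  destruct H as [[p [s [h [Hf ->]]]]|[Hc [-> Hn]]].
  - destruct (swap_final_letter _ _ _ _ _ _ Hsw Hf) as [p' [s' [Hf' [S1 _]]]].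
    left. exists p', s', h. split; auto. apply eval_shuffle. auto.
  - right. split; auto. split; [apply eval_shuffle, swap_shuffle; auto|].
    eapply swap_no_final_letter; eauto.
Qed.

Lemma final_in_det v (W : word) c c' a' a'' : final_in v W c a' -> final_in v W c' a'' ->
  c = c' /\ a' = a''.
Proof.
  intros [[p [s [h [Hf ->]]]]|[Hc [-> Hn]]] [[p' [s' [h' [Hf' ->]]]]|[Hc' [-> Hn']]].
  - destruct (final_letter_unique _ _ _ _ _ _ _ _ Hf Hf') as [<- [Hx <-]].
    apply mkX_inj in Hx. auto.
  - exfalso. eapply Hn'; eauto.
  - exfalso. eapply Hn; eauto.
  - split; congruence.
Qed.

Lemma final_in_of_final v (a : GP E M) c a' : @final V E M v a c a' ->
  exists W, reduced E W /\ eval E W = a /\ final_in v W c a'.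
Proof.
  intros [[h [w [Hred [Hev Ha']]]]|[Hc [Ha' [w [Hred [Hev Hcase]]]]]].
  - exists (w ++ [mkX v c h]). split; auto. split; auto. left.
    exists w, [], h. split; [apply final_letter_last; reflexivity|]. rewrite app_nil_r. auto.
  - exists w. split; auto. split; auto. right. split; auto. split; [congruence|].
    apply no_final_letter_iff_blocked. exact Hcase.
Qed.

Lemma final_exists v (a : GP E M) : exists c a', @final V E M v a c a'.
Proof.
  destruct (reduced_word_exists a) as [W [HW <-]].
  destruct (final_letter_dec v W) as [[p [x [s Hf]]]|Hnf].
  - destruct (letter_mkX v x (proj1 (proj2 Hf))) as [c [hc ->]]. pose proof Hf as [Hw [_ Hs]].
    destruct (reduced_delete_final p (mkX v c hc) s) as [Hr1 Hnf1];
      [rewrite <- Hw; auto|exact Hs|].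
    exists c, (eval E (p ++ s)). left. exists hc, (p ++ s). split; [|split].
    + apply reduced_snoc; auto.
    + apply eval_shuffle. rewrite Hw, <- app_assoc. apply shuffle_sym, shuffle_to_end. exact Hs.
    + reflexivity.
  - exists (mone (M v)), (eval E W). right. split; auto. split; auto.
    exists W. split; auto. split; auto. apply no_final_letter_iff_blocked. exact Hnf.
Qed.

Lemma final_unique v (a : GP E M) c a' c' a'' :
  @final V E M v a c a' -> @final V E M v a c' a'' -> c = c' /\ a' = a''.
Proof.
  intros H1 H2. destruct (final_in_of_final _ _ _ _ H1) as [W1 [Hr1 [He1 F1]]].
  destruct (final_in_of_final _ _ _ _ H2) as [W2 [Hr2 [He2 F2]]].
  rewrite <- He2 in He1.
  apply (final_in_shuffle _ _ _ _ _ (reduced_eval_shuffle _ _ Hr1 Hr2 He1)) in F1.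
  exact (final_in_det _ _ _ _ _ _ F1 F2).
Qed.

End GraphProductNormalForm.

Theorem proposition1p3 (V : Type) (E : V -> V -> Prop)
  (E_sym : forall u v, E u v -> E v u) (E_irr : forall v, ~ E v v)
  (M : V -> monoid) (v : V) (a : GP E M) :
  (exists! c : M v, exists a' : GP E M, @final V E M v a c a') /\
  (exists! a' : GP E M, exists c : M v, @final V E M v a c a').
Proof.
  destruct (final_exists V E M E_sym E_irr v a) as [c [a' Hf]].
  pose proof (final_unique V E M E_sym E_irr v a) as Huniq.
  split.
  - exists c. split; [eauto|]. intros c' [a'' Hf']. exact (proj1 (Huniq _ _ _ _ Hf Hf')).
  - exists a'. split; [eauto|]. intros a'' [c' Hf']. exact (proj2 (Huniq _ _ _ _ Hf Hf')).
Qed.
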